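(* Let $X$, $X_m$, $P_m$, $J_m$ satisfy the approximation properties in the context. Let $A$ generate a strongly continuous semigroup $(T(t))_{t\ge0}$ on $X$ and let $A_m$ generate strongly continuous semigroups $(T_m(t))_{t\ge0}$ on $X_m$, with constants $M_T\ge1$, $\omega_T\in\mathbb{R}$ such that $\|T(h)\|\le M_Te^{\omega_Th}$ and $\|T_m(h)\|\le M_Te^{\omega_Th}$ for all $h>0$, $m\in\mathbb{N}$, and assume $\lim_{m\to\infty}J_mA_mP_mx=Ax$ for all $x\in D(A)$ (in particular $P_mx\in D(A_m)$ for such $x$). Fix $t_0>0$. Then for all $t\in(0,t_0]$, $$\lim_{n,m\to\infty}\frac{J_mT_m(t/n)P_mx-J_mP_mx}{t/n}=Ax\quad\text{for all }x\in D(A),$$ where the limit as $m\to\infty$ is uniform in $n\in\mathbb{N}$.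
   Context: Approximation properties: $X_m$ ($m\in\mathbb{N}$) are Banach spaces and $P_m:X\to X_m$, $J_m:X_m\to X$ are bounded linear operators such that (i) $P_mJ_m=I_m$ (the identity on $X_m$) for all $m$; (ii) $\lim_{m\to\infty}J_mP_mx=x$ for all $x\in X$; (iii) $\|J_m\|\le M_J$, $\|P_m\|\le M_P$ for all $m$, for some constants $M_J,M_P>0$. A double limit $\lim_{n,m\to\infty}a_{n,m}=a$ means: for every $\varepsilon>0$ there is $N$ with $\|a_{n,m}-a\|\le\varepsilon$ for all $n,m\ge N$. *)

From Stdlib Require Import Reals.
Open Scope R_scope.

Record Banach := MkBanach {
  car :> Type;
  vzero : car;
  vadd : car -> car -> car;
  vopp : car -> car;
  vscal : R -> car -> car;
  vnorm : car -> R;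
  vadd_assoc : forall x y z, vadd x (vadd y z) = vadd (vadd x y) z;
  vadd_comm : forall x y, vadd x y = vadd y x;
  vadd_0 : forall x, vadd x vzero = x;
  vadd_opp : forall x, vadd x (vopp x) = vzero;
  vscal_1 : forall x, vscal 1 x = x;
  vscal_assoc : forall a b x, vscal a (vscal b x) = vscal (a * b) x;
  vscal_distr_v : forall a x y, vscal a (vadd x y) = vadd (vscal a x) (vscal a y);
  vscal_distr_s : forall a b x, vscal (a + b) x = vadd (vscal a x) (vscal b x);
  vnorm_eq0 : forall x, vnorm x = 0 -> x = vzero;
  vnorm_scal : forall a x, vnorm (vscal a x) = Rabs a * vnorm x;
  vnorm_triangle : forall x y, vnorm (vadd x y) <= vnorm x + vnorm y;
  vcomplete : forall u : nat -> car,
    (forall eps, 0 < eps -> exists N, forall p q, (N <= p)%nat -> (N <= q)%nat ->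
        vnorm (vadd (u p) (vopp (u q))) < eps) ->
    exists l, forall eps, 0 < eps -> exists N, forall n, (N <= n)%nat ->
        vnorm (vadd (u n) (vopp l)) < eps
}.

Arguments vzero {b0}.
Arguments vadd {b0}.
Arguments vopp {b0}.
Arguments vscal {b0}.
Arguments vnorm {b0}.

Definition vsub {X : Banach} (x y : X) : X := vadd x (vopp y).

Definition seq_lim {X : Banach} (u : nat -> X) (l : X) : Prop :=
  forall eps, 0 < eps -> exists N, forall n, (N <= n)%nat -> vnorm (vsub (u n) l) <= eps.

Definition rlim0 {X : Banach} (f : R -> X) (l : X) : Prop :=
  forall eps, 0 < eps -> exists delta, 0 < delta /\
    forall h, 0 < h < delta -> vnorm (vsub (f h) l) <= eps.

Definition bdd_linear {X Y : Banach} (f : X -> Y) : Prop :=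
  (forall x y, f (vadd x y) = vadd (f x) (f y)) /\
  (forall a x, f (vscal a x) = vscal a (f x)) /\
  (exists C, forall x, vnorm (f x) <= C * vnorm x).

Definition op_norm_le {X Y : Banach} (f : X -> Y) (M : R) : Prop :=
  forall x, vnorm (f x) <= M * vnorm x.

(* Strongly continuous (C0) semigroup (T(t))_{t>=0}; T is only used at t >= 0. *)
Definition C0_semigroup {X : Banach} (T : R -> X -> X) : Prop :=
  (forall t, 0 <= t -> bdd_linear (T t)) /\
  (forall x, T 0 x = x) /\
  (forall t s x, 0 <= t -> 0 <= s -> T (t + s) x = T t (T s x)) /\
  (forall x t, 0 <= t -> forall eps, 0 < eps -> exists delta, 0 < delta /\
     forall s, 0 <= s -> Rabs (s - t) < delta -> vnorm (vsub (T s x) (T t x)) <= eps).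

Definition generator {X : Banach} (T : R -> X -> X) (D : X -> Prop) (A : X -> X) : Prop :=
  forall x,
    (D x <-> exists y, rlim0 (fun h => vscal (/ h) (vsub (T h x) x)) y) /\
    (D x -> rlim0 (fun h => vscal (/ h) (vsub (T h x) x)) (A x)).

From Stdlib Require Import Reals Lra Lia Classical.
Open Scope R_scope.

(* Write defect m s w := || Tm m s (P m w) - P m (T s w) || for the failure of
   P m to intertwine the two semigroups.  The heart of the proof is the bound
   defect m h x <= e h for x in D(A), uniformly in small h and large m
   (defect_small_o).  It rests on a mean value inequality for the defect
   (gap_mean_value, proved by real induction): its derivative at z is
   controlled by || J_m A_m P_m z - A z || and by the defect at A z.  The
   latter vanishes uniformly along the compact orbit of A x, since that orbit
   lies in the closure of D(A) and a compactness argument turns pointwise into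
   uniform convergence (defect_vanishes_on_orbit, uniform_on_path).  A
   telescoping argument over a finite time grid (defect_grid) then only needs
   the convergence of the generators at finitely many points of the orbit of x.
   Together with the uniform convergence J_m P_m -> I on the difference
   quotients of x this yields diff_quot_consistency, which is the uniform
   statement of the theorem; the double limit follows by adding the
   convergence (T(h)x - x)/h -> A x. *)

Section VectorAlgebra.
Variable X : Banach.
Implicit Types x y z a b c d : X.

Lemma vadd_0l x : vadd vzero x = x.
Proof. rewrite vadd_comm; apply vadd_0. Qed.

Lemma vadd_oppl x : vadd (vopp x) x = vzero.
Proof. rewrite vadd_comm; apply vadd_opp. Qed.

Lemma vadd_cancel_l x y z : vadd x y = vadd x z -> y = z.
Proof.
  intro Heq. rewrite <- (vadd_0l y), <- (vadd_0l z), <- (vadd_oppl x).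
  rewrite <- !vadd_assoc, Heq. reflexivity.
Qed.

Lemma vscal_0 x : vscal 0 x = vzero.
Proof.
  apply (vadd_cancel_l (vscal 0 x)). rewrite vadd_0, <- vscal_distr_s.
  now rewrite Rplus_0_l.
Qed.

Lemma vopp_unique x y : vadd x y = vzero -> y = vopp x.
Proof. intro Hxy. apply (vadd_cancel_l x). now rewrite Hxy, vadd_opp. Qed.

Lemma vopp_scal x : vopp x = vscal (-1) x.
Proof.
  symmetry; apply vopp_unique.
  rewrite <- (vscal_1 X x) at 1. rewrite <- vscal_distr_s.
  replace (1 + -1) with 0 by ring. apply vscal_0.
Qed.

Lemma vopp_opp x : vopp (vopp x) = x.
Proof. symmetry; apply vopp_unique, vadd_oppl. Qed.

Lemma vopp_add x y : vopp (vadd x y) = vadd (vopp x) (vopp y).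
Proof. rewrite !vopp_scal. apply vscal_distr_v. Qed.

Lemma vopp_zero : vopp (@vzero X) = vzero.
Proof. symmetry; apply vopp_unique, vadd_0. Qed.

Lemma vnorm_opp x : vnorm (vopp x) = vnorm x.
Proof.
  rewrite vopp_scal, vnorm_scal.
  replace (Rabs (-1)) with 1 by (rewrite Rabs_left; lra). ring.
Qed.

Lemma vnorm_zero : vnorm (@vzero X) = 0.
Proof. rewrite <- (vscal_0 vzero), vnorm_scal, Rabs_R0; ring. Qed.

Lemma vnorm_nonneg x : 0 <= vnorm x.
Proof.
  pose proof (vnorm_triangle X x (vopp x)) as Htri.
  rewrite vadd_opp, vnorm_zero, vnorm_opp in Htri. lra.
Qed.

Lemma vsub_diag x : vsub x x = vzero.
Proof. apply vadd_opp. Qed.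

Lemma vsub_0r x : vsub x vzero = x.
Proof. unfold vsub. rewrite vopp_zero. apply vadd_0. Qed.

Lemma vsub_chain a b c : vsub a c = vadd (vsub a b) (vsub b c).
Proof.
  unfold vsub. rewrite <- vadd_assoc. f_equal.
  rewrite vadd_assoc, vadd_oppl, vadd_0l. reflexivity.
Qed.

Lemma vsub_swap a b : vsub b a = vopp (vsub a b).
Proof. unfold vsub. rewrite vopp_add, vopp_opp. apply vadd_comm. Qed.

Lemma vsub_sub a b c d : vsub (vsub a b) (vsub c d) = vsub (vsub a c) (vsub b d).
Proof.
  unfold vsub. rewrite !vopp_add, !vopp_opp, <- !vadd_assoc. f_equal.
  rewrite !vadd_assoc. f_equal. apply vadd_comm.
Qed.

Lemma vsub_eq0 a b : vsub a b = vzero -> a = b.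
Proof.
  intro Hab. unfold vsub in Hab. apply vopp_unique in Hab.
  rewrite <- (vopp_opp a), <- Hab, vopp_opp. reflexivity.
Qed.

Lemma vscal_sub s a b : vscal s (vsub a b) = vsub (vscal s a) (vscal s b).
Proof.
  unfold vsub. rewrite vscal_distr_v, !vopp_scal, !vscal_assoc, Rmult_comm.
  reflexivity.
Qed.

Lemma vnorm_sub_triangle a b c : vnorm (vsub a c) <= vnorm (vsub a b) + vnorm (vsub b c).
Proof. rewrite (vsub_chain a b c). apply vnorm_triangle. Qed.

Lemma vnorm_sub_sym a b : vnorm (vsub a b) = vnorm (vsub b a).
Proof. rewrite (vsub_swap a b), vnorm_opp. reflexivity. Qed.

Lemma vnorm_sub_le a b : vnorm (vsub a b) <= vnorm a + vnorm b.
Proof. unfold vsub. rewrite <- (vnorm_opp b). apply vnorm_triangle. Qed.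

Lemma vnorm_le_sub a b : vnorm a <= vnorm b + vnorm (vsub a b).
Proof.
  replace a with (vadd b (vsub a b)) at 1 by
    (unfold vsub; rewrite vadd_comm, <- vadd_assoc, vadd_oppl, vadd_0; reflexivity).
  apply vnorm_triangle.
Qed.

Lemma vnorm_sub_sub a b c d :
  vnorm (vsub (vsub a b) (vsub c d)) <= vnorm (vsub a c) + vnorm (vsub b d).
Proof. rewrite vsub_sub. apply vnorm_sub_le. Qed.

Lemma vnorm_sub_perturb a b a' b' :
  vnorm (vsub a b) <= vnorm (vsub a' b') + (vnorm (vsub a a') + vnorm (vsub b b')).
Proof.
  eapply Rle_trans; [apply (vnorm_le_sub (vsub a b) (vsub a' b'))|].
  apply Rplus_le_compat_l, vnorm_sub_sub.
Qed.

Lemma vnorm_sub_scal s a b :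
  vnorm (vsub (vscal s a) (vscal s b)) = Rabs s * vnorm (vsub a b).
Proof. rewrite <- vscal_sub. apply vnorm_scal. Qed.

Lemma vnorm_small_eq a b : (forall e, 0 < e -> vnorm (vsub a b) <= e) -> a = b.
Proof.
  intro Hsmall. apply vsub_eq0, vnorm_eq0, Rle_antisym; [|apply vnorm_nonneg].
  apply le_epsilon. intros e He. rewrite Rplus_0_l. auto.
Qed.

End VectorAlgebra.

Section BoundedLinearMaps.
Variables (X Y : Banach) (f : X -> Y).
Hypothesis Hf : bdd_linear f.

Lemma linear_scal a x : f (vscal a x) = vscal a (f x).
Proof. apply (proj1 (proj2 Hf)). Qed.

Lemma linear_sub x y : f (vsub x y) = vsub (f x) (f y).
Proof.
  unfold vsub. rewrite (proj1 Hf), !vopp_scal. f_equal. apply linear_scal.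
Qed.

Lemma linear_norm_sub L x y :
  op_norm_le f L -> vnorm (vsub (f x) (f y)) <= L * vnorm (vsub x y).
Proof. intro HL. rewrite <- linear_sub. apply HL. Qed.

Lemma linear_pos_bound : exists C, 0 < C /\ op_norm_le f C.
Proof.
  destruct Hf as [_ [_ [C HC]]]. exists (Rabs C + 1). split.
  - pose proof (Rabs_pos C); lra.
  - intro x. eapply Rle_trans; [apply HC|]. apply Rmult_le_compat_r.
    + apply vnorm_nonneg.
    + pose proof (Rle_abs C). lra.
Qed.

Lemma linear_rlim0 (g : R -> X) l : rlim0 g l -> rlim0 (fun h => f (g h)) (f l).
Proof.
  intros Hg e He. destruct linear_pos_bound as [C [HC HfC]].
  destruct (Hg (e / C)) as [d [Hd Hd']]; [apply Rdiv_lt_0_compat; lra|].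
  exists d. split; [exact Hd|]. intros h Hh.
  eapply Rle_trans; [apply (linear_norm_sub C); exact HfC|].
  specialize (Hd' h Hh). apply (Rmult_le_compat_l C) in Hd'; [|lra].
  replace (C * (e / C)) with e in Hd' by (field; lra). exact Hd'.
Qed.

End BoundedLinearMaps.

Arguments linear_scal {X Y} f Hf a x.
Arguments linear_sub {X Y} f Hf x y.
Arguments linear_norm_sub {X Y} f Hf L x y.
Arguments linear_pos_bound {X Y} f Hf.
Arguments linear_rlim0 {X Y} f Hf g l.

Lemma scal_bdd_linear (X : Banach) (a : R) : bdd_linear (fun x : X => vscal a x).
Proof.
  split; [|split].
  - intros x y. apply vscal_distr_v.
  - intros b x. rewrite !vscal_assoc, Rmult_comm. reflexivity.
  - exists (Rabs a). intro x. rewrite vnorm_scal. lra.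
Qed.

Section OneSidedLimits.
Variable X : Banach.

Lemma rlim0_unique (f : R -> X) l1 l2 : rlim0 f l1 -> rlim0 f l2 -> l1 = l2.
Proof.
  intros H1 H2. apply vnorm_small_eq. intros e He.
  destruct (H1 (e/2)) as [d1 [Hd1 H1']]; [lra|].
  destruct (H2 (e/2)) as [d2 [Hd2 H2']]; [lra|].
  set (h := Rmin d1 d2 / 2).
  assert (Hh : 0 < h < d1 /\ 0 < h < d2).
  { unfold h. pose proof (Rmin_l d1 d2). pose proof (Rmin_r d1 d2).
    pose proof (Rmin_pos d1 d2 Hd1 Hd2). lra. }
  pose proof (H1' h (proj1 Hh)). pose proof (H2' h (proj2 Hh)).
  pose proof (vnorm_sub_triangle X l1 (f h) l2) as Htri.
  rewrite (vnorm_sub_sym X l1 (f h)) in Htri. lra.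
Qed.

Lemma rlim0_ext (f g : R -> X) l :
  (forall h, 0 < h -> f h = g h) -> rlim0 f l -> rlim0 g l.
Proof.
  intros Heq Hf e He. destruct (Hf e He) as [d [Hd Hd']]. exists d. split; auto.
  intros h Hh. rewrite <- Heq by lra. auto.
Qed.

Lemma rlim0_sub (f g : R -> X) a b :
  rlim0 f a -> rlim0 g b -> rlim0 (fun h => vsub (f h) (g h)) (vsub a b).
Proof.
  intros Hf Hg e He.
  destruct (Hf (e/2)) as [d1 [Hd1 H1]]; [lra|].
  destruct (Hg (e/2)) as [d2 [Hd2 H2]]; [lra|].
  exists (Rmin d1 d2). split; [apply Rmin_pos; auto|]. intros h Hh.
  pose proof (Rmin_l d1 d2). pose proof (Rmin_r d1 d2).
  eapply Rle_trans; [apply vnorm_sub_sub|].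
  specialize (H1 h ltac:(lra)). specialize (H2 h ltac:(lra)). lra.
Qed.

End OneSidedLimits.

Arguments rlim0_unique {X} f l1 l2.
Arguments rlim0_ext {X} f g l.
Arguments rlim0_sub {X} f g a b.

Lemma real_induction (S : R -> Prop) (r : R) :
  0 <= r -> S 0 ->
  (forall c, 0 < c <= r -> (forall u, 0 <= u < c -> S u) -> S c) ->
  (forall c, 0 <= c < r -> S c -> exists d, 0 < d /\ forall u, c < u < c + d -> S u) ->
  S r.
Proof.
  intros Hr S0 Hleft Hright.
  set (E := fun s => 0 <= s <= r /\ forall u, 0 <= u <= s -> S u).
  assert (HE0 : E 0).
  { split; [lra|]. intros u Hu. replace u with 0 by lra. exact S0. }
  destruct (completeness E) as [c [Hub Hlub]].
  { exists r. intros s [Hs _]. lra. }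
  { exists 0. exact HE0. }
  assert (Hc0 : 0 <= c) by (apply Hub, HE0).
  assert (Hcr : c <= r) by (apply Hlub; intros s [Hs _]; lra).
  assert (Hbelow : forall u, 0 <= u < c -> S u).
  { intros u Hu. apply NNPP. intro HnS. assert (c <= u); [|lra].
    apply Hlub. intros s [Hs HsS]. apply Rnot_lt_le. intro Hus. apply HnS, HsS. lra. }
  assert (Hc : S c).
  { destruct (Rle_lt_or_eq_dec 0 c Hc0) as [Hpos|<-]; [apply Hleft; auto; lra|exact S0]. }
  destruct (Rle_lt_or_eq_dec c r Hcr) as [Hlt|<-]; [|exact Hc].
  exfalso. destruct (Hright c (conj Hc0 Hlt) Hc) as [d [Hd Hext]].
  set (s := Rmin (c + d / 2) r).
  assert (Hs : c < s <= r /\ s < c + d).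
  { unfold s. pose proof (Rmin_l (c + d / 2) r). pose proof (Rmin_r (c + d / 2) r).
    split; [split; [apply Rmin_glb_lt; lra|lra]|lra]. }
  assert (HEs : E s).
  { split; [lra|]. intros u Hu. destruct (Rle_dec u c) as [Huc|Huc].
    - destruct (Req_dec u c) as [->|]; [exact Hc|apply Hbelow; lra].
    - apply Hext. lra. }
  pose proof (Hub s HEs). lra.
Qed.

Lemma le_left_limit (phi : R -> R) (L c : R) :
  0 < c ->
  (forall e, 0 < e -> exists d, 0 < d /\
     forall u, 0 <= u < c -> c - u < d -> phi c <= phi u + e) ->
  (forall u, 0 <= u < c -> phi u <= L * u) -> phi c <= L * c.
Proof.
  intros Hc Hcont Hbelow. apply le_epsilon. intros e He.
  destruct (Hcont (e/2)) as [d [Hd Hd']]; [lra|].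
  assert (HL : 0 < 2 * (Rabs L + 1)) by (pose proof (Rabs_pos L); lra).
  set (k := Rmin (Rmin d c) (e / (2 * (Rabs L + 1)))).
  assert (Hk : 0 < k <= d /\ k <= c /\ k <= e / (2 * (Rabs L + 1))).
  { unfold k. pose proof (Rmin_l (Rmin d c) (e / (2 * (Rabs L + 1)))).
    pose proof (Rmin_r (Rmin d c) (e / (2 * (Rabs L + 1)))).
    pose proof (Rmin_l d c). pose proof (Rmin_r d c).
    assert (0 < e / (2 * (Rabs L + 1))) by (apply Rdiv_lt_0_compat; lra).
    repeat split; try lra. apply Rmin_pos; [apply Rmin_pos|]; lra. }
  assert (HLk : Rabs L * k <= e / 2).
  { apply (Rle_trans _ (Rabs L * (e / (2 * (Rabs L + 1))))).
    - apply Rmult_le_compat_l; [apply Rabs_pos|lra].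
    - apply (Rmult_le_reg_r (2 * (Rabs L + 1))); [lra|].
      replace (Rabs L * (e / (2 * (Rabs L + 1))) * (2 * (Rabs L + 1))) with (Rabs L * e)
        by (field; lra).
      pose proof (Rabs_pos L). nra. }
  pose proof (Hd' (c - k / 2) ltac:(lra) ltac:(lra)).
  pose proof (Hbelow (c - k / 2) ltac:(lra)).
  assert (- L * k <= Rabs L * k).
  { apply Rmult_le_compat_r; [lra|]. rewrite <- Rabs_Ropp. apply Rle_abs. }
  nra.
Qed.

Lemma mean_value_ineq (phi : R -> R) (r B : R) :
  0 <= r -> phi 0 <= 0 ->
  (forall c, 0 < c <= r -> forall e, 0 < e -> exists d, 0 < d /\
     forall u, 0 <= u < c -> c - u < d -> phi c <= phi u + e) ->
  (forall c, 0 <= c < r -> forall e, 0 < e -> exists d, 0 < d /\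
     forall k, 0 < k < d -> phi (c + k) <= phi c + (B + e) * k) ->
  phi r <= B * r.
Proof.
  intros Hr H0 Hcont Hdini.
  assert (Hslope : forall e, 0 < e -> phi r <= (B + e) * r).
  { intros e He. apply (real_induction (fun s => phi s <= (B + e) * s)); auto.
    - lra.
    - intros c Hc Hbelow. apply le_left_limit; auto. lra.
    - intros c Hc Hphic. destruct (Hdini c Hc e He) as [d [Hd Hk]].
      exists d. split; [exact Hd|]. intros u Hu.
      replace u with (c + (u - c)) by ring. specialize (Hk (u - c) ltac:(lra)). nra. }
  apply le_epsilon. intros e He.
  specialize (Hslope (e / (r + 1)) ltac:(apply Rdiv_lt_0_compat; lra)).
  assert (e / (r + 1) * r <= e).
  { apply (Rmult_le_reg_r (r + 1)); [lra|].
    replace (e / (r + 1) * r * (r + 1)) with (e * r) by (field; lra). nra. }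
  nra.
Qed.

Lemma Rabs_le_inv (x a : R) : Rabs x <= a -> - a <= x <= a.
Proof.
  intro Hx. pose proof (Rle_abs x). pose proof (Rle_abs (- x)). rewrite Rabs_Ropp in *. lra.
Qed.

Lemma exp_le_compat (x y : R) : x <= y -> exp x <= exp y.
Proof.
  intro Hxy. destruct (Rle_lt_or_eq_dec x y Hxy) as [Hlt| ->]; [|lra].
  left; apply exp_increasing, Hlt.
Qed.

Lemma growth_const_ge1 (MT wT H : R) : 1 <= MT -> 0 <= H -> 1 <= MT * exp (Rabs wT * H).
Proof.
  intros HMT HH. assert (1 <= exp (Rabs wT * H)).
  { rewrite <- exp_0. apply exp_le_compat. pose proof (Rabs_pos wT). nra. }
  nra.
Qed.

Section Semigroups.
Variables (X : Banach) (S : R -> X -> X).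
Hypothesis HS : C0_semigroup S.

Lemma sg_linear t : 0 <= t -> bdd_linear (S t).
Proof. apply (proj1 HS). Qed.

Lemma sg_0 x : S 0 x = x.
Proof. apply (proj1 (proj2 HS)). Qed.

Lemma sg_add t s x : 0 <= t -> 0 <= s -> S (t + s) x = S t (S s x).
Proof. apply (proj1 (proj2 (proj2 HS))). Qed.

Lemma sg_cont x t : 0 <= t ->
  forall e, 0 < e -> exists d, 0 < d /\
     forall s, 0 <= s -> Rabs (s - t) < d -> vnorm (vsub (S s x) (S t x)) <= e.
Proof. apply (proj2 (proj2 (proj2 HS))). Qed.

Lemma sg_local_bound MT wT H : 1 <= MT -> 0 <= H ->
  (forall h, 0 < h -> op_norm_le (S h) (MT * exp (wT * h))) ->
  forall s, 0 <= s <= H -> op_norm_le (S s) (MT * exp (Rabs wT * H)).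
Proof.
  intros HMT HH Hb s Hs y.
  pose proof (growth_const_ge1 MT wT H HMT HH). pose proof (vnorm_nonneg X y).
  destruct (Rle_lt_or_eq_dec 0 s (proj1 Hs)) as [Hpos|<-].
  - eapply Rle_trans; [apply Hb, Hpos|]. apply Rmult_le_compat_r; [assumption|].
    apply Rmult_le_compat_l; [lra|]. apply exp_le_compat.
    assert (wT * s <= Rabs wT * s) by (apply Rmult_le_compat_r; [lra|apply Rle_abs]).
    assert (Rabs wT * s <= Rabs wT * H) by (apply Rmult_le_compat_l; [apply Rabs_pos|lra]).
    lra.
  - rewrite sg_0. nra.
Qed.

Lemma orbit_unif_cont K H y : 0 < K ->
  (forall s, 0 <= s <= H -> op_norm_le (S s) K) ->
  forall e, 0 < e -> exists d, 0 < d /\ forall s s', 0 <= s <= H -> 0 <= s' <= H ->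
    Rabs (s - s') <= d -> vnorm (vsub (S s y) (S s' y)) <= e.
Proof.
  intros HK Hb e He.
  destruct (sg_cont y 0 (Rle_refl 0) (e / K)) as [d [Hd Hd']];
    [apply Rdiv_lt_0_compat; lra|].
  exists (d / 2). split; [lra|].
  assert (Hordered : forall s s', 0 <= s' <= s -> s <= H -> s - s' <= d / 2 ->
    vnorm (vsub (S s y) (S s' y)) <= e).
  { intros s s' Hss Hs Hd2. replace s with (s' + (s - s')) by ring.
    rewrite sg_add by lra.
    eapply Rle_trans; [apply (linear_norm_sub _ (sg_linear s' ltac:(lra))), Hb; lra|].
    specialize (Hd' (s - s') ltac:(lra) ltac:(rewrite Rminus_0_r, Rabs_right; lra)).
    rewrite sg_0 in Hd'. apply (Rmult_le_compat_l K) in Hd'; [|lra].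
    replace (K * (e / K)) with e in Hd' by (field; lra). exact Hd'. }
  intros s s' Hs Hs' Hss. apply Rabs_le_inv in Hss.
  destruct (Rle_dec s' s).
  - apply Hordered; lra.
  - rewrite vnorm_sub_sym. apply Hordered; lra.
Qed.

Definition diff_quot (x : X) (h : R) : X := vscal (/ h) (vsub (S h x) x).

Variables (D : X -> Prop) (A : X -> X).
Hypothesis HG : generator S D A.

Lemma generator_lim x : D x -> rlim0 (diff_quot x) (A x).
Proof. intro Hx. apply (proj2 (HG x) Hx). Qed.

Lemma generator_char x y : rlim0 (diff_quot x) y -> D x /\ A x = y.
Proof.
  intro Hy. assert (Hx : D x) by (apply (proj1 (HG x)); exists y; exact Hy).
  split; [exact Hx|]. apply (rlim0_unique (diff_quot x)); auto. apply generator_lim, Hx.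
Qed.

Lemma generator_orbit x s : 0 <= s -> D x -> D (S s x) /\ A (S s x) = S s (A x).
Proof.
  intros Hs Hx. apply generator_char.
  apply (rlim0_ext (fun h => S s (diff_quot x h))).
  - intros h Hh. unfold diff_quot.
    rewrite (linear_scal _ (sg_linear s Hs)), (linear_sub _ (sg_linear s Hs)).
    rewrite <- !sg_add by lra. rewrite Rplus_comm. reflexivity.
  - apply (linear_rlim0 _ (sg_linear s Hs)), generator_lim, Hx.
Qed.

Lemma generator_dom_sub x y : D x -> D y -> D (vsub x y).
Proof.
  intros Hx Hy. apply (generator_char _ (vsub (A x) (A y))).
  apply (rlim0_ext (fun h => vsub (diff_quot x h) (diff_quot y h))).
  - intros h Hh. unfold diff_quot.
    rewrite (linear_sub _ (sg_linear h ltac:(lra))), vsub_sub, <- vscal_sub. reflexivity.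
  - apply rlim0_sub; apply generator_lim; assumption.
Qed.

Lemma generator_dom_scal a x : D x -> D (vscal a x).
Proof.
  intro Hx. apply (generator_char _ (vscal a (A x))).
  apply (rlim0_ext (fun h => vscal a (diff_quot x h))).
  - intros h Hh. unfold diff_quot.
    rewrite (linear_scal _ (sg_linear h ltac:(lra))), <- vscal_sub, !vscal_assoc, Rmult_comm.
    reflexivity.
  - apply (linear_rlim0 _ (scal_bdd_linear X a)), generator_lim, Hx.
Qed.

Lemma generator_dom_diff_quot x h : 0 <= h -> D x -> D (diff_quot x h).
Proof.
  intros Hh Hx. apply generator_dom_scal, generator_dom_sub; auto.
  apply generator_orbit; auto.
Qed.

(* The orbit of A x lies in the closure of D: S(s) A x is approximated by the
   elements S(s) ((S(h)x - x)/h) of D. *)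
Lemma generator_orbit_approx x s : 0 <= s -> D x ->
  forall e, 0 < e -> exists u, D u /\ vnorm (vsub (S s (A x)) u) <= e.
Proof.
  intros Hs Hx e He.
  destruct (linear_rlim0 _ (sg_linear s Hs) _ _ (generator_lim x Hx) e He) as [d [Hd Hd']].
  exists (S s (diff_quot x (d / 2))). split.
  - apply generator_orbit; [lra|]. apply generator_dom_diff_quot; [lra|exact Hx].
  - rewrite vnorm_sub_sym. apply Hd'. lra.
Qed.

End Semigroups.

Arguments diff_quot {X} S x h.

Lemma norm_right_dini {Z : Banach} (g : R -> Z) c v B :
  rlim0 (fun k => vscal (/ k) (vsub (g (c + k)) (g c))) v -> vnorm v <= B ->
  forall e, 0 < e -> exists d, 0 < d /\
    forall k, 0 < k < d -> vnorm (g (c + k)) <= vnorm (g c) + (B + e) * k.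
Proof.
  intros Hv HvB e He. destruct (Hv e He) as [d [Hd Hd']].
  exists d. split; [exact Hd|]. intros k Hk.
  set (q := vscal (/ k) (vsub (g (c + k)) (g c))).
  assert (Hstep : vnorm (vsub (g (c + k)) (g c)) = k * vnorm q).
  { unfold q. rewrite vnorm_scal, Rabs_right by (left; apply Rinv_0_lt_compat; lra).
    field. lra. }
  pose proof (vnorm_le_sub Z (g (c + k)) (g c)).
  pose proof (vnorm_le_sub Z q v). specialize (Hd' k Hk). fold q in Hd'.
  nra.
Qed.

Section IntertwiningDefect.
Variables (Y Z : Banach) (S1 : R -> Y -> Y) (D1 : Y -> Prop) (A1 : Y -> Y)
  (S2 : R -> Z -> Z) (D2 : Z -> Prop) (A2 : Z -> Z) (Q : Y -> Z).
Hypotheses (HS1 : C0_semigroup S1) (HG1 : generator S1 D1 A1)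
  (HS2 : C0_semigroup S2) (HG2 : generator S2 D2 A2) (HQ : bdd_linear Q).

Let gap (z : Y) (u : R) : Z := vsub (S2 u (Q z)) (Q (S1 u z)).

Lemma gap_left_cont z c : 0 <= c ->
  forall e, 0 < e -> exists d, 0 < d /\
    forall u, 0 <= u < c -> c - u < d -> vnorm (gap z c) <= vnorm (gap z u) + e.
Proof.
  intros Hc e He. destruct (linear_pos_bound Q HQ) as [C [HC HQC]].
  destruct (sg_cont Z S2 HS2 (Q z) c Hc (e / 2)) as [d1 [Hd1 H1]]; [lra|].
  destruct (sg_cont Y S1 HS1 z c Hc (e / (2 * C))) as [d2 [Hd2 H2]];
    [apply Rdiv_lt_0_compat; lra|].
  exists (Rmin d1 d2). split; [apply Rmin_pos; auto|]. intros u Hu Hcu.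
  pose proof (Rmin_l d1 d2). pose proof (Rmin_r d1 d2).
  assert (Hud : forall d, c - u < d -> Rabs (u - c) < d)
    by (intros; rewrite Rabs_left; lra).
  specialize (H1 u ltac:(lra) (Hud d1 ltac:(lra))).
  specialize (H2 u ltac:(lra) (Hud d2 ltac:(lra))).
  pose proof (linear_norm_sub Q HQ C (S1 u z) (S1 c z) HQC).
  apply (Rmult_le_compat_l C) in H2; [|lra].
  replace (C * (e / (2 * C))) with (e / 2) in H2 by (field; lra).
  pose proof (vnorm_le_sub Z (gap z c) (gap z u)).
  pose proof (vnorm_sub_sub Z (S2 c (Q z)) (Q (S1 c z)) (S2 u (Q z)) (Q (S1 u z))) as Hdiff.
  rewrite (vnorm_sub_sym Z (S2 c (Q z))), (vnorm_sub_sym Z (Q (S1 c z))) in Hdiff.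
  unfold gap in *. lra.
Qed.

Lemma gap_right_deriv z c : 0 <= c -> D1 z -> D2 (Q z) ->
  rlim0 (fun k => vscal (/ k) (vsub (gap z (c + k)) (gap z c)))
        (vsub (S2 c (A2 (Q z))) (Q (S1 c (A1 z)))).
Proof.
  intros Hc Hz HQz.
  apply (rlim0_ext (fun k => vsub (S2 c (diff_quot S2 (Q z) k)) (Q (S1 c (diff_quot S1 z k))))).
  - intros k Hk. unfold gap, diff_quot.
    rewrite (sg_add Z S2 HS2), (sg_add Y S1 HS1) by lra.
    rewrite (linear_scal _ (sg_linear Z S2 HS2 c Hc)), (linear_sub _ (sg_linear Z S2 HS2 c Hc)).
    rewrite (linear_scal _ (sg_linear Y S1 HS1 c Hc)), (linear_sub _ (sg_linear Y S1 HS1 c Hc)).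
    rewrite (linear_scal Q HQ), (linear_sub Q HQ), <- vscal_sub, vsub_sub.
    reflexivity.
  - apply rlim0_sub.
    + apply (linear_rlim0 _ (sg_linear Z S2 HS2 c Hc)), (generator_lim Z S2 D2 A2 HG2), HQz.
    + apply (linear_rlim0 Q HQ), (linear_rlim0 _ (sg_linear Y S1 HS1 c Hc)).
      apply (generator_lim Y S1 D1 A1 HG1), Hz.
Qed.

Lemma gap_mean_value z B sig : D1 z -> D2 (Q z) -> 0 <= sig ->
  (forall s, 0 <= s <= sig -> vnorm (vsub (S2 s (A2 (Q z))) (Q (S1 s (A1 z)))) <= B) ->
  vnorm (vsub (S2 sig (Q z)) (Q (S1 sig z))) <= B * sig.
Proof.
  intros Hz HQz Hsig HB.
  apply (mean_value_ineq (fun u => vnorm (gap z u))); auto.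
  - unfold gap. rewrite (sg_0 Z S2 HS2), (sg_0 Y S1 HS1), vsub_diag, vnorm_zero. lra.
  - intros c Hc. apply gap_left_cont. lra.
  - intros c Hc. apply norm_right_dini with (1 := gap_right_deriv z c ltac:(lra) Hz HQz).
    apply HB. lra.
Qed.

End IntertwiningDefect.

Lemma grid_floor (eta h : R) : 0 < eta -> 0 <= h ->
  exists k : nat, INR k * eta <= h < INR (S k) * eta.
Proof.
  intros He Hh. destruct (INR_archimed eta h He) as [n Hn].
  induction n as [|n IH].
  - simpl in Hn. lra.
  - destruct (Rlt_dec h (INR n * eta)) as [Hl|Hl].
    + apply IH; lra.
    + exists n. split; lra.
Qed.

Lemma grid_index_lt (k n : nat) (eta h : R) :
  0 < eta -> INR k * eta <= h -> h < INR n * eta -> (k < n)%nat.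
Proof. intros He H1 H2. apply INR_lt. apply (Rmult_lt_reg_r eta); lra. Qed.

Lemma eventually_finite (Pr : nat -> nat -> R -> Prop) (n : nat) :
  (forall j, (j <= n)%nat -> exists s0, 0 < s0 /\ exists N,
     forall m sg, (N <= m)%nat -> 0 <= sg <= s0 -> Pr j m sg) ->
  exists s0, 0 < s0 /\ exists N,
    forall j m sg, (j <= n)%nat -> (N <= m)%nat -> 0 <= sg <= s0 -> Pr j m sg.
Proof.
  induction n as [|n IH]; intro Hev.
  - destruct (Hev 0%nat (le_n _)) as [s0 [Hs0 [N HN]]].
    exists s0. split; [exact Hs0|]. exists N.
    intros j m sg Hj. replace j with 0%nat by lia. auto.
  - destruct IH as [s0 [Hs0 [N HN]]]; [intros j Hj; apply Hev; lia|].
    destruct (Hev (S n) (le_n _)) as [s1 [Hs1 [N1 HN1]]].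
    exists (Rmin s0 s1). split; [apply Rmin_pos; auto|]. exists (Nat.max N N1).
    intros j m sg Hj Hm Hsg. pose proof (Rmin_l s0 s1). pose proof (Rmin_r s0 s1).
    destruct (Nat.eq_dec j (S n)) as [->|Hne].
    + apply HN1; [lia|lra].
    + apply HN; [lia|lia|lra].
Qed.

Lemma uniform_on_path {X : Banach} (g : R -> X) (a b : R) (phi : nat -> R -> X -> R)
  (L smax : R) :
  a <= b -> 0 <= L -> 0 < smax ->
  (forall e, 0 < e -> exists d, 0 < d /\ forall s s', a <= s <= b -> a <= s' <= b ->
     Rabs (s - s') <= d -> vnorm (vsub (g s) (g s')) <= e) ->
  (forall m sg w w', 0 <= sg <= smax -> phi m sg w <= phi m sg w' + L * vnorm (vsub w w')) ->
  (forall s, a <= s <= b -> forall e, 0 < e -> exists s0, 0 < s0 /\ exists N,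
     forall m sg, (N <= m)%nat -> 0 <= sg <= s0 -> phi m sg (g s) <= e) ->
  forall e, 0 < e -> exists s0, 0 < s0 /\ exists N, forall m sg s, (N <= m)%nat ->
     0 <= sg <= s0 -> a <= s <= b -> phi m sg (g s) <= e.
Proof.
  intros Hab HL Hsmax Hg Hlip Hpt e He.
  destruct (Hg (e / (2 * (L + 1)))) as [d [Hd Hgd]]; [apply Rdiv_lt_0_compat; lra|].
  set (node := fun j : nat => Rmin (a + INR j * d) b).
  assert (Hnode : forall j, a <= node j <= b).
  { intro j. unfold node. split; [|apply Rmin_r].
    apply Rmin_glb; [|lra]. pose proof (pos_INR j). nra. }
  destruct (INR_archimed d (b - a) Hd) as [n Hn].
  destruct (eventually_finite (fun j m sg => phi m sg (g (node j)) <= e / 2) n)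
    as [s0 [Hs0 [N HN]]].
  { intros j _. apply Hpt; [apply Hnode|lra]. }
  exists (Rmin s0 smax). split; [apply Rmin_pos; auto|]. exists N.
  intros m sg s Hm Hsg Hs. pose proof (Rmin_l s0 smax). pose proof (Rmin_r s0 smax).
  destruct (grid_floor d (s - a) Hd ltac:(lra)) as [k [Hk1 Hk2]].
  assert (Hkn : (k < n)%nat) by (apply (grid_index_lt k n d (s - a)); lra).
  assert (Hnodek : node k = a + INR k * d) by (unfold node; apply Rmin_left; lra).
  eapply Rle_trans; [apply (Hlip m sg (g s) (g (node k))); lra|].
  assert (H1 : phi m sg (g (node k)) <= e / 2) by (apply HN; [lia|lia|lra]).
  assert (H2 : vnorm (vsub (g s) (g (node k))) <= e / (2 * (L + 1))).
  { apply Hgd; auto. rewrite Hnodek. rewrite S_INR in Hk2. rewrite Rabs_right; lra. }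
  apply (Rmult_le_compat_l L) in H2; [|lra].
  assert (L * (e / (2 * (L + 1))) <= e / 2).
  { apply (Rmult_le_reg_r (2 * (L + 1))); [lra|].
    replace (L * (e / (2 * (L + 1))) * (2 * (L + 1))) with (L * e) by (field; lra). nra. }
  lra.
Qed.

Section ApproximationConsistency.
Variables (X : Banach) (Xm : nat -> Banach)
  (P : forall m, X -> Xm m) (J : forall m, Xm m -> X) (MJ MP : R).
Hypotheses (HP : forall m, bdd_linear (P m)) (HJ : forall m, bdd_linear (J m))
  (HPJ : forall m (y : Xm m), P m (J m y) = y)
  (HJP : forall x, seq_lim (fun m => J m (P m x)) x)
  (HMJ : 0 < MJ) (HMP : 0 < MP)
  (HJb : forall m, op_norm_le (J m) MJ) (HPb : forall m, op_norm_le (P m) MP).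
Variables (T : R -> X -> X) (D : X -> Prop) (A : X -> X)
  (Tm : forall m, R -> Xm m -> Xm m) (Dm : forall m, Xm m -> Prop)
  (Am : forall m, Xm m -> Xm m).
Hypotheses (HT : C0_semigroup T) (HA : generator T D A)
  (HTm : forall m, C0_semigroup (Tm m)) (HAm : forall m, generator (Tm m) (Dm m) (Am m)).
Hypothesis HAconv : forall x, D x ->
  (exists N, forall m, (N <= m)%nat -> Dm m (P m x)) /\
  seq_lim (fun m => J m (Am m (P m x))) (A x).
Variables H K : R.
Hypotheses (HH : 0 < H) (HK : 1 <= K)
  (HKT : forall s, 0 <= s <= H -> op_norm_le (T s) K)
  (HKm : forall m s, 0 <= s <= H -> op_norm_le (Tm m s) K).

Definition defect (m : nat) (s : R) (w : X) : R :=
  vnorm (vsub (Tm m s (P m w)) (P m (T s w))).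

Lemma defect_0 m w : defect m 0 w = 0.
Proof. unfold defect. rewrite (sg_0 _ _ (HTm m)), (sg_0 _ _ HT), vsub_diag. apply vnorm_zero. Qed.

Lemma defect_le_norm m s w : 0 <= s <= H -> defect m s w <= 2 * K * MP * vnorm w.
Proof.
  intro Hs. unfold defect. eapply Rle_trans; [apply vnorm_sub_le|].
  pose proof (HKm m s Hs (P m w)). pose proof (HPb m w).
  pose proof (HPb m (T s w)). pose proof (HKT s Hs w). pose proof (vnorm_nonneg X w).
  nra.
Qed.

Lemma defect_lipschitz m s w w' : 0 <= s <= H ->
  defect m s w <= defect m s w' + 2 * K * MP * vnorm (vsub w w').
Proof.
  intro Hs. unfold defect. eapply Rle_trans; [apply vnorm_sub_perturb|].
  apply Rplus_le_compat_l.
  pose proof (linear_norm_sub _ (sg_linear _ _ (HTm m) s ltac:(lra)) K (P m w) (P m w')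
    (HKm m s Hs)).
  pose proof (linear_norm_sub _ (HP m) MP w w' (HPb m)).
  pose proof (linear_norm_sub _ (sg_linear _ _ HT s ltac:(lra)) K w w' (HKT s Hs)).
  pose proof (linear_norm_sub _ (HP m) MP (T s w) (T s w') (HPb m)).
  pose proof (vnorm_nonneg X (vsub w w')).
  nra.
Qed.

(* Propagation of the defect along the semigroup law:
   Tm(a+b) P - P T(a+b) = Tm(a) (Tm(b) P - P T(b)) + (Tm(a) P - P T(a)) T(b). *)
Lemma defect_add m a b w : 0 <= a <= H -> 0 <= b ->
  defect m (a + b) w <= K * defect m b w + defect m a (T b w).
Proof.
  intros Ha Hb. unfold defect.
  rewrite (sg_add _ _ (HTm m)), (sg_add _ _ HT) by lra.
  eapply Rle_trans; [apply (vnorm_sub_triangle _ _ (Tm m a (P m (T b w))))|].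
  apply Rplus_le_compat_r.
  apply (linear_norm_sub _ (sg_linear _ _ (HTm m) a ltac:(lra))), HKm, Ha.
Qed.

(* The derivative of the defect at z is controlled by the approximation error of
   the generators at z and by the defect at A z. *)
Lemma defect_deriv_bound m z s : 0 <= s <= H ->
  vnorm (vsub (Tm m s (Am m (P m z))) (P m (T s (A z)))) <=
    K * MP * vnorm (vsub (J m (Am m (P m z))) (A z)) + defect m s (A z).
Proof.
  intro Hs. unfold defect.
  eapply Rle_trans; [apply (vnorm_sub_triangle _ _ (Tm m s (P m (A z))))|].
  apply Rplus_le_compat_r. rewrite <- (HPJ m (Am m (P m z))) at 1.
  eapply Rle_trans;
    [apply (linear_norm_sub _ (sg_linear _ _ (HTm m) s ltac:(lra))), HKm, Hs|].
  rewrite Rmult_assoc. apply Rmult_le_compat_l; [lra|].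
  apply (linear_norm_sub _ (HP m)), HPb.
Qed.

Lemma defect_mean_value m z B sig : D z -> Dm m (P m z) -> 0 <= sig <= H ->
  (forall s, 0 <= s <= sig ->
     K * MP * vnorm (vsub (J m (Am m (P m z))) (A z)) + defect m s (A z) <= B) ->
  defect m sig z <= B * sig.
Proof.
  intros Hz HPz Hsig HB.
  apply (gap_mean_value X (Xm m) T D A (Tm m) (Dm m) (Am m) (P m)); auto; try lra.
  intros s Hs. eapply Rle_trans; [apply defect_deriv_bound; lra|]. auto.
Qed.

Lemma defect_linear_on_domain u : D u ->
  exists B N, 0 <= B /\ forall m s, (N <= m)%nat -> 0 <= s <= H -> defect m s u <= B * s.
Proof.
  intro Hu. destruct (HAconv u Hu) as [[N1 HN1] Hconv].
  destruct (Hconv 1) as [N2 HN2]; [lra|].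
  exists (K * MP + 2 * K * MP * vnorm (A u)), (Nat.max N1 N2).
  pose proof (vnorm_nonneg X (A u)). assert (HKMP : 0 < K * MP) by nra.
  split; [nra|]. intros m s Hm Hs.
  apply defect_mean_value; auto; [apply HN1; lia|]. intros s' Hs'.
  pose proof (HN2 m ltac:(lia)). pose proof (defect_le_norm m s' (A u) ltac:(lra)).
  nra.
Qed.

Lemma defect_vanishes_on_closure y :
  (forall e, 0 < e -> exists u, D u /\ vnorm (vsub y u) <= e) ->
  forall e, 0 < e -> exists s0, 0 < s0 /\ exists N,
    forall m s, (N <= m)%nat -> 0 <= s <= s0 -> defect m s y <= e.
Proof.
  intros Happrox e He.
  assert (HL : 0 < 2 * (2 * K * MP + 1)) by nra.
  destruct (Happrox (e / (2 * (2 * K * MP + 1)))) as [u [Hu Hyu]];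
    [apply Rdiv_lt_0_compat; lra|].
  destruct (defect_linear_on_domain u Hu) as [B [N [HB HN]]].
  exists (Rmin H (e / (2 * (B + 1)))).
  split; [apply Rmin_pos; [lra|apply Rdiv_lt_0_compat; lra]|]. exists N.
  intros m s Hm Hs.
  pose proof (Rmin_l H (e / (2 * (B + 1)))). pose proof (Rmin_r H (e / (2 * (B + 1)))).
  eapply Rle_trans; [apply (defect_lipschitz m s y u); lra|].
  assert (Hdu : defect m s u <= e / 2).
  { eapply Rle_trans; [apply HN; auto; lra|].
    apply (Rle_trans _ (B * (e / (2 * (B + 1))))); [apply Rmult_le_compat_l; lra|].
    apply (Rmult_le_reg_r (2 * (B + 1))); [lra|].
    replace (B * (e / (2 * (B + 1))) * (2 * (B + 1))) with (B * e) by (field; lra). nra. }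
  assert (Hyu' : 2 * K * MP * vnorm (vsub y u) <= e / 2).
  { apply (Rle_trans _ (2 * K * MP * (e / (2 * (2 * K * MP + 1))))).
    - apply Rmult_le_compat_l; [nra|exact Hyu].
    - apply (Rmult_le_reg_r (2 * (2 * K * MP + 1))); [lra|].
      replace (2 * K * MP * (e / (2 * (2 * K * MP + 1))) * (2 * (2 * K * MP + 1)))
        with (2 * K * MP * e) by (field; lra). nra. }
  lra.
Qed.

(* The same holds uniformly along the orbit of A x, a compact subset of the closure of D. *)
Lemma defect_vanishes_on_orbit x : D x ->
  forall e, 0 < e -> exists s0, 0 < s0 /\ exists N, forall m sg s, (N <= m)%nat ->
    0 <= sg <= s0 -> 0 <= s <= H -> defect m sg (T s (A x)) <= e.
Proof.
  intro Hx. apply (uniform_on_path (fun s => T s (A x)) 0 H defect (2 * K * MP) H); try lra.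
  - nra.
  - apply (orbit_unif_cont X T HT K); auto; lra.
  - intros m sg w w' Hsg. apply defect_lipschitz, Hsg.
  - intros s Hs. apply defect_vanishes_on_closure.
    apply (generator_orbit_approx X T HT D A HA); [lra|exact Hx].
Qed.

(* Telescoping over an eta-grid: a defect bound B l for steps of length l <= eta
   starting from the grid points T(j eta) x gives a global bound K^2 B h. *)
Lemma defect_grid m x eta n B : 0 < eta -> INR n * eta <= H -> 0 <= B ->
  (forall j l, (j <= n)%nat -> 0 <= l <= eta -> defect m l (T (INR j * eta) x) <= B * l) ->
  forall h, 0 <= h < INR n * eta -> defect m h x <= K * K * B * h.
Proof.
  intros Heta HnH HB Hstep h Hh.
  assert (Hgrid : forall k j, (j + k <= n)%nat ->
    defect m (INR k * eta) (T (INR j * eta) x) <= K * (INR k * eta) * B).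
  { induction k as [|k IH]; intros j Hjk.
    - simpl. rewrite Rmult_0_l, defect_0. lra.
    - assert (Hkn : INR (S k) <= INR n) by (apply le_INR; lia).
      rewrite S_INR in *. pose proof (pos_INR k). pose proof (pos_INR j).
      replace ((INR k + 1) * eta) with (INR k * eta + eta) by ring.
      eapply Rle_trans; [apply defect_add; nra|].
      rewrite <- (sg_add _ _ HT) by nra.
      replace (eta + INR j * eta) with (INR (S j) * eta) by (rewrite S_INR; ring).
      pose proof (Hstep j eta ltac:(lia) ltac:(lra)). pose proof (IH (S j) ltac:(lia)).
      nra. }
  destruct (grid_floor eta h Heta ltac:(lra)) as [k [Hk1 Hk2]].
  assert (Hkn : (k < n)%nat) by (apply (grid_index_lt k n eta h); lra).
  assert (Hkn' : INR k <= INR n) by (apply le_INR; lia).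
  pose proof (pos_INR k).
  replace h with ((h - INR k * eta) + INR k * eta) by ring.
  eapply Rle_trans; [apply defect_add; rewrite S_INR in Hk2; nra|].
  pose proof (Hgrid k 0%nat ltac:(lia)) as Hfirst.
  simpl INR in Hfirst. rewrite Rmult_0_l, (sg_0 _ _ HT) in Hfirst.
  pose proof (Hstep k (h - INR k * eta) ltac:(lia) ltac:(rewrite S_INR in Hk2; lra)).
  assert (1 <= K * K) by nra.
  assert (B * (h - INR k * eta) <= K * K * B * (h - INR k * eta)).
  { assert (0 <= B * (h - INR k * eta)) by nra.
    replace (K * K * B * (h - INR k * eta)) with (K * K * (B * (h - INR k * eta))) by ring.
    nra. }
  nra.
Qed.

Lemma defect_small_o x : D x ->
  forall e, 0 < e -> exists N, forall m h, (N <= m)%nat -> 0 <= h <= H / 2 ->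
    defect m h x <= e * h.
Proof.
  intros Hx e He.
  assert (HKK : 0 < K * K) by nra.
  set (B := e / (K * K)).
  assert (HB : 0 < B) by (apply Rdiv_lt_0_compat; lra).
  destruct (defect_vanishes_on_orbit x Hx (B / 2)) as [eta1 [Heta1 [N1 HN1]]]; [lra|].
  set (eta := Rmin eta1 (H / 2)).
  assert (Heta : 0 < eta <= eta1 /\ eta <= H / 2).
  { unfold eta. pose proof (Rmin_l eta1 (H / 2)). pose proof (Rmin_r eta1 (H / 2)).
    split; [split; [apply Rmin_pos; lra|]|]; lra. }
  destruct Heta as [[Heta0 Heta1'] HetaH].
  destruct (grid_floor eta (H / 2) ltac:(lra) ltac:(lra)) as [k0 [Hk01 Hk02]].
  set (n := S k0).
  assert (Hn : H / 2 < INR n * eta <= H) by (unfold n; rewrite S_INR in *; lra).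
  set (z := fun j : nat => T (INR j * eta) x).
  assert (Hz : forall j, D (z j) /\ A (z j) = T (INR j * eta) (A x)).
  { intro j. apply (generator_orbit X T HT D A HA); auto. pose proof (pos_INR j). nra. }
  assert (HKMP : 0 < K * MP) by nra.
  set (c := B / (2 * K * MP)).
  destruct (eventually_finite (fun j m _ => Dm m (P m (z j)) /\
     vnorm (vsub (J m (Am m (P m (z j)))) (A (z j))) <= c) n) as [s2 [Hs2 [N2 HN2]]].
  { intros j Hj. destruct (HAconv (z j) (proj1 (Hz j))) as [[Na HNa] Hc].
    destruct (Hc c) as [Nb HNb]; [unfold c; apply Rdiv_lt_0_compat; lra|].
    exists 1. split; [lra|]. exists (Nat.max Na Nb).
    intros m _ Hm _. split; [apply HNa|apply HNb]; lia. }
  exists (Nat.max N1 N2). intros m h Hm Hh.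
  replace (e * h) with (K * K * B * h) by (unfold B; field; lra).
  apply (defect_grid m x eta n B); try lra.
  intros j l Hj Hl. destruct (HN2 j m 0 Hj ltac:(lia) ltac:(lra)) as [HDm Herr].
  apply defect_mean_value; auto; [apply Hz|lra|]. intros s Hs.
  assert (Hjn : INR j <= INR n) by (apply le_INR; exact Hj).
  assert (INR j * eta <= INR n * eta) by (apply Rmult_le_compat_r; lra).
  pose proof (pos_INR j).
  change (T (INR j * eta) x) with (z j). rewrite (proj2 (Hz j)) in *.
  assert (defect m s (T (INR j * eta) (A x)) <= B / 2)
    by (apply HN1; [lia|lra|split; [nra|lra]]).
  assert (K * MP * c = B / 2) by (unfold c; field; nra).
  apply (Rmult_le_compat_l (K * MP)) in Herr; [|lra]. lra.
Qed.

Lemma jp_lipschitz m w w' :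
  vnorm (vsub (J m (P m w)) w) <=
    vnorm (vsub (J m (P m w')) w') + (MJ * MP + 1) * vnorm (vsub w w').
Proof.
  eapply Rle_trans; [apply vnorm_sub_perturb|]. apply Rplus_le_compat_l.
  pose proof (linear_norm_sub _ (HJ m) MJ (P m w) (P m w') (HJb m)).
  pose proof (linear_norm_sub _ (HP m) MP w w' (HPb m)).
  pose proof (vnorm_nonneg X (vsub w w')). nra.
Qed.

Lemma jp_uniform_on_orbit x :
  forall e, 0 < e -> exists N, forall m s, (N <= m)%nat -> 0 <= s <= H ->
    vnorm (vsub (J m (P m (T s x))) (T s x)) <= e.
Proof.
  intros e He.
  destruct (uniform_on_path (fun s => T s x) 0 H (fun m _ w => vnorm (vsub (J m (P m w)) w))
    (MJ * MP + 1) 1) with (e := e) as [s0 [Hs0 [N HN]]]; try lra.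
  - nra.
  - apply (orbit_unif_cont X T HT K); auto; lra.
  - intros m _ w w' _. apply jp_lipschitz.
  - intros s _ e' He'. destruct (HJP (T s x) e' He') as [N HN].
    exists 1. split; [lra|]. exists N. intros m _ Hm _. apply HN, Hm.
  - exists N. intros m s Hm Hs. apply (HN m 0); auto; lra.
Qed.

(* J_m P_m converges to the identity uniformly on the difference quotients of
   x in D: near h = 0 they approach A x, away from 0 they are controlled by the orbit. *)
Lemma jp_uniform_on_diff_quot x : D x ->
  forall e, 0 < e -> exists N, forall m h, (N <= m)%nat -> 0 < h <= H ->
    vnorm (vsub (J m (P m (diff_quot T x h))) (diff_quot T x h)) <= e.
Proof.
  intros Hx e He.
  assert (HL : 0 < 2 * (MJ * MP + 1)) by nra.
  destruct (generator_lim X T D A HA x Hx (e / (2 * (MJ * MP + 1)))) as [d [Hd Hnear]];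
    [apply Rdiv_lt_0_compat; lra|].
  destruct (HJP (A x) (e / 2)) as [N1 HN1]; [lra|].
  destruct (jp_uniform_on_orbit x (e * d / 2)) as [N2 HN2]; [nra|].
  exists (Nat.max N1 N2). intros m h Hm Hh.
  destruct (Rlt_dec h d) as [Hhd|Hhd].
  - eapply Rle_trans; [apply (jp_lipschitz m _ (A x))|].
    specialize (Hnear h ltac:(lra)). specialize (HN1 m ltac:(lia)).
    apply (Rmult_le_compat_l (MJ * MP + 1)) in Hnear; [|nra].
    replace ((MJ * MP + 1) * (e / (2 * (MJ * MP + 1)))) with (e / 2) in Hnear
      by (field; lra).
    lra.
  - assert (Hq : vsub (J m (P m (diff_quot T x h))) (diff_quot T x h) =
      vscal (/ h) (vsub (vsub (J m (P m (T h x))) (T h x)) (vsub (J m (P m x)) x))).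
    { unfold diff_quot. rewrite (linear_scal _ (HP m)), (linear_scal _ (HJ m)).
      rewrite (linear_sub _ (HP m)), (linear_sub _ (HJ m)), <- vscal_sub, vsub_sub.
      reflexivity. }
    rewrite Hq, vnorm_scal, Rabs_right by (left; apply Rinv_0_lt_compat; lra).
    pose proof (HN2 m h ltac:(lia) ltac:(lra)) as Hend.
    pose proof (HN2 m 0 ltac:(lia) ltac:(lra)) as Hstart. rewrite (sg_0 _ _ HT) in Hstart.
    pose proof (vnorm_sub_le X (vsub (J m (P m (T h x))) (T h x)) (vsub (J m (P m x)) x)).
    apply (Rmult_le_reg_l h); [lra|]. rewrite <- Rmult_assoc, Rinv_r, Rmult_1_l by lra.
    nra.
Qed.

Lemma diff_quot_consistency x : D x ->
  forall e, 0 < e -> exists N, forall m h, (N <= m)%nat -> 0 < h <= H / 2 ->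
    vnorm (vsub (vscal (/ h) (vsub (J m (Tm m h (P m x))) (J m (P m x))))
                (diff_quot T x h)) <= e.
Proof.
  intros Hx e He.
  destruct (defect_small_o x Hx (e / (2 * MJ))) as [N1 HN1]; [apply Rdiv_lt_0_compat; lra|].
  destruct (jp_uniform_on_diff_quot x Hx (e / 2)) as [N2 HN2]; [lra|].
  exists (Nat.max N1 N2). intros m h Hm Hh.
  set (q := diff_quot T x h).
  eapply Rle_trans; [apply (vnorm_sub_triangle _ _ (J m (P m q)))|].
  assert (HJPq : J m (P m q) = vscal (/ h) (vsub (J m (P m (T h x))) (J m (P m x)))).
  { unfold q, diff_quot. rewrite (linear_scal _ (HP m)), (linear_scal _ (HJ m)).
    rewrite (linear_sub _ (HP m)), (linear_sub _ (HJ m)). reflexivity. }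
  assert (Hfirst : vnorm (vsub (vscal (/ h) (vsub (J m (Tm m h (P m x))) (J m (P m x))))
                               (J m (P m q))) <= e / 2).
  { rewrite HJPq, vnorm_sub_scal, vsub_sub, vsub_diag, vsub_0r.
    rewrite Rabs_right by (left; apply Rinv_0_lt_compat; lra).
    pose proof (linear_norm_sub _ (HJ m) MJ (Tm m h (P m x)) (P m (T h x)) (HJb m)).
    specialize (HN1 m h ltac:(lia) ltac:(lra)). unfold defect in HN1.
    apply (Rmult_le_compat_l MJ) in HN1; [|lra].
    replace (MJ * (e / (2 * MJ) * h)) with (e / 2 * h) in HN1 by (field; lra).
    apply (Rmult_le_reg_l h); [lra|]. rewrite <- Rmult_assoc, Rinv_r, Rmult_1_l by lra.
    lra. }
  specialize (HN2 m h ltac:(lia) ltac:(lra)). fold q in HN2. lra.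
Qed.

End ApproximationConsistency.

Lemma step_size_bounds (t : R) (n : nat) : 0 < t -> (1 <= n)%nat -> 0 < t / INR n <= t.
Proof.
  intros Ht Hn. assert (Hn1 : 1 <= INR n) by (apply (le_INR 1); exact Hn).
  split; [apply Rdiv_lt_0_compat; lra|].
  apply (Rmult_le_reg_r (INR n)); [lra|]. unfold Rdiv.
  rewrite Rmult_assoc, Rinv_l, Rmult_1_r by lra. nra.
Qed.

Lemma step_size_small (t d : R) : 0 < t -> 0 < d ->
  exists N, forall n, (1 <= n)%nat -> (N <= n)%nat -> t / INR n < d.
Proof.
  intros Ht Hd. destruct (INR_archimed d t Hd) as [N HN].
  exists N. intros n Hn HNn.
  assert (Hn1 : 1 <= INR n) by (apply (le_INR 1); exact Hn).
  assert (INR N <= INR n) by (apply le_INR; exact HNn).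
  apply (Rmult_lt_reg_r (INR n)); [lra|]. unfold Rdiv.
  rewrite Rmult_assoc, Rinv_l, Rmult_1_r by lra. nra.
Qed.

Theorem mainTheorem3
  (X : Banach) (Xm : nat -> Banach)
  (P : forall m, X -> Xm m) (J : forall m, Xm m -> X) (MJ MP : R)
  (* approximation properties *)
  (HP : forall m, bdd_linear (P m)) (HJ : forall m, bdd_linear (J m))
  (HPJ : forall m (y : Xm m), P m (J m y) = y)
  (HJP : forall x, seq_lim (fun m => J m (P m x)) x)
  (HMJ : 0 < MJ) (HMP : 0 < MP)
  (HJb : forall m, op_norm_le (J m) MJ) (HPb : forall m, op_norm_le (P m) MP)
  (* semigroups and generators *)
  (T : R -> X -> X) (D : X -> Prop) (A : X -> X)
  (Tm : forall m, R -> Xm m -> Xm m) (Dm : forall m, Xm m -> Prop)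
  (Am : forall m, Xm m -> Xm m)
  (HT : C0_semigroup T) (HA : generator T D A)
  (HTm : forall m, C0_semigroup (Tm m)) (HAm : forall m, generator (Tm m) (Dm m) (Am m))
  (MT wT : R) (HMT : 1 <= MT)
  (HTb : forall h, 0 < h -> op_norm_le (T h) (MT * exp (wT * h)))
  (HTmb : forall m h, 0 < h -> op_norm_le (Tm m h) (MT * exp (wT * h)))
  (HAconv : forall x, D x ->
     (exists N, forall m, (N <= m)%nat -> Dm m (P m x)) /\
     seq_lim (fun m => J m (Am m (P m x))) (A x))
  (t0 : R) (Ht0 : 0 < t0) :
  forall t, 0 < t <= t0 -> forall x, D x ->
    (* double limit n, m -> oo *)
    (forall eps, 0 < eps -> exists N, forall n m, (1 <= n)%nat -> (N <= n)%nat -> (N <= m)%nat ->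
       vnorm (vsub (vscal (/ (t / INR n)) (vsub (J m (Tm m (t / INR n) (P m x))) (J m (P m x))))
                   (A x)) <= eps) /\
    (* the limit as m -> oo is uniform in n *)
    (forall eps, 0 < eps -> exists N, forall n m, (1 <= n)%nat -> (N <= m)%nat ->
       vnorm (vsub (vscal (/ (t / INR n)) (vsub (J m (Tm m (t / INR n) (P m x))) (J m (P m x))))
                   (vscal (/ (t / INR n)) (vsub (T (t / INR n) x) x))) <= eps).
Proof.
  intros t Ht x Hx.
  set (K := MT * exp (Rabs wT * (2 * t))).
  assert (HK : 1 <= K) by (apply growth_const_ge1; lra).
  assert (HKT : forall s, 0 <= s <= 2 * t -> op_norm_le (T s) K)
    by (apply sg_local_bound; auto; lra).
  assert (HKm : forall m s, 0 <= s <= 2 * t -> op_norm_le (Tm m s) K)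
    by (intro m; apply sg_local_bound; auto; lra).
  pose proof (diff_quot_consistency X Xm P J MJ MP HP HJ HPJ HJP HMJ HMP HJb HPb
    T D A Tm Dm Am HT HA HTm HAm HAconv (2 * t) K ltac:(lra) HK HKT HKm x Hx) as Hcons.
  replace (2 * t / 2) with t in Hcons by field.
  split.
  - (* Double limit: add the convergence of (T(h)x - x)/h to A x as h = t/n -> 0. *)
    intros e He.
    destruct (Hcons (e / 2)) as [N1 HN1]; [lra|].
    destruct (generator_lim X T D A HA x Hx (e / 2)) as [d [Hd Hnear]]; [lra|].
    destruct (step_size_small t d ltac:(lra) Hd) as [N2 HN2].
    exists (Nat.max N1 N2). intros n m Hn HNn HNm.
    pose proof (step_size_bounds t n ltac:(lra) Hn) as Hstep.
    eapply Rle_trans; [apply (vnorm_sub_triangle _ _ (diff_quot T x (t / INR n)))|].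
    pose proof (HN1 m (t / INR n) ltac:(lia) ltac:(lra)).
    pose proof (Hnear (t / INR n) (conj (proj1 Hstep) (HN2 n Hn ltac:(lia)))).
    lra.
  -
    intros e He. destruct (Hcons e He) as [N HN]. exists N. intros n m Hn Hm.
    apply HN; [exact Hm|]. apply step_size_bounds; [lra|exact Hn].
Qed.
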